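(* Let $Z\subset\mathbb{R}^5$ be the set of real solutions $(x_1,\dots,x_5)$ of the system $$1+x_1=x_3x_4,\quad 1+x_2=x_4x_5,\quad 1+x_3=x_5x_1,\quad 1+x_4=x_1x_2,\quad 1+x_5=x_2x_3.$$ Then $Z$ is a smooth surface in $\mathbb{R}^5$. Its closure $S\subset\mathbb{R}\mathbb{P}^5$ (where $\mathbb{R}^5$ is regarded as a standard affine chart of $\mathbb{R}\mathbb{P}^5$) is a smooth compact surface, and its complexification $S_{\mathbb{C}}\subset\mathbb{C}\mathbb{P}^5$ is a smooth compact complex surface.
   Context: The complexification $S_{\mathbb{C}}$ means the closure in $\mathbb{C}\mathbb{P}^5$ of the set of complex solutions $(x_1,\dots,x_5)\in\mathbb{C}^5$ of the same system, with $\mathbb{C}^5$ regarded as the standard affine chart of $\mathbb{C}\mathbb{P}^5$. *)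

From HB Require Import structures.
From mathcomp Require Import all_boot all_order all_algebra.
From mathcomp Require Import all_classical all_reals all_analysis.
From mathcomp Require Import complex.
Import numFieldNormedType.Exports.
Set Implicit Arguments. Unset Strict Implicit. Unset Printing Implicit Defensive.
Import Order.TTheory GRing.Theory Num.Theory.
Local Open Scope ring_scope.
Local Open Scope classical_set_scope.

(* Derivatives
   are K-derivatives, so for K = complex R "smooth" means holomorphic. *)

(* j-th coordinate (0-based) of x : K^n.+1 *)
Definition coord {K : numFieldType} {n : nat} (x : 'rV[K]_n.+1) (j : nat) : K :=
  x ord0 (inord j).

Definition dirD {K : numFieldType} {n m : nat} (vs : seq 'rV[K]_n)
  (f : 'rV[K]_n -> 'rV[K]_m) : 'rV[K]_n -> 'rV[K]_m :=
  foldr (fun v g => fun x => 'D_v g x) f vs.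

Definition smooth_on {K : numFieldType} {n m : nat} (U : set 'rV[K]_n)
  (f : 'rV[K]_n -> 'rV[K]_m) : Prop :=
  forall (vs : seq 'rV[K]_n) (x : 'rV[K]_n), U x ->
    (forall v, derivable (dirD vs f) x v) /\ {for x, continuous (dirD vs f)}.

Definition jacobian {K : numFieldType} {n m : nat} (F : 'rV[K]_n -> 'rV[K]_m)
  (p : 'rV[K]_n) : 'M[K]_(n, m) :=
  \matrix_(i < n) ('D_(delta_mx 0 i) F p : 'rV[K]_m).

Definition submanifold {K : numFieldType} {n : nat} (k : nat)
  (M : set 'rV[K]_n) : Prop :=
  forall p, M p ->
    exists (U : set 'rV[K]_n) (F : 'rV[K]_n -> 'rV[K]_(n - k)),
      [/\ open U, U p, smooth_on U F,
          (forall x, U x -> (M x <-> F x = 0)) &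
          \rank (jacobian F p) = (n - k)%N].

Definition sys {K : numFieldType} (x : 'rV[K]_5) : Prop :=
  [/\ 1 + coord x 0 = coord x 2 * coord x 3,
      1 + coord x 1 = coord x 3 * coord x 4,
      1 + coord x 2 = coord x 4 * coord x 0,
      1 + coord x 3 = coord x 0 * coord x 1 &
      1 + coord x 4 = coord x 1 * coord x 2].

Definition solset (K : numFieldType) : set 'rV[K]_5 := [set x | sys x].
Arguments solset K : clear implicits.

(* Projective space KP^5 = (K^6 \ 0)/K^*.  The affine chart used for K^5 itself is i = 0. *)
Definition chart {K : numFieldType} (i : 'I_6) (w : 'rV[K]_5) : 'rV[K]_6 :=
  \row_j (if unlift i j is Some j' then w ord0 j' else 1).

Definition cone {K : numFieldType} (A : set 'rV[K]_5) : set 'rV[K]_6 :=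
  [set v | exists t z, [/\ t != 0, A z & v = t *: chart ord0 z]].

(* Closure of A in KP^5, represented by its (scaling-invariant) preimage in
   K^6 \ 0: since K^6 \ 0 -> KP^5 is open, the preimage of the closure is the
   closure (in K^6 \ 0) of the preimage. *)
Definition proj_closure {K : numFieldType} (A : set 'rV[K]_5) : set 'rV[K]_6 :=
  [set v | v != 0 /\ closure (cone A) v].

Definition in_chart {K : numFieldType} (i : 'I_6) (S : set 'rV[K]_6) : set 'rV[K]_5 :=
  [set w | S (chart i w)].

(* A subset of KP^5 (given by its preimage S in K^6 \ 0) is a smooth
   (complex, if K = C) submanifold of dimension k iff it is so in each of the
   six standard affine charts (which form the smooth atlas of KP^5). *)
Definition proj_submanifold {K : numFieldType} (k : nat) (S : set 'rV[K]_6) : Prop :=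
  forall i : 'I_6, submanifold k (in_chart i S).

(* A subset of KP^5 (given by its preimage S) is compact iff its intersection
   with the unit sphere of K^6 (which maps onto KP^5) is compact. *)
Definition proj_compact {K : numFieldType} (S : set 'rV[K]_6) : Prop :=
  compact [set v | S v /\ `|v| = 1].

(* The system is the 5-periodic Lyness recurrence 1 + x_k = x_(k+2) x_(k+3), indices
   mod 5, so it is invariant under the cyclic shift of coordinates.  Near a solution with
   x_k <> 0 the three equations involving x_k imply the other two and have a Jacobian of
   rank 3; some coordinate is nonzero because 1 + x_0 = x_2 x_3.  Hence Z is a smooth
   surface, over any normed field, in particular over R and C.
   In the coordinates (t : y_0 : ... : y_4) the projective closure is cut out by the
   quadrics t^2 + t y_k = y_(k+2) y_(k+3).  At infinity they force y to be supported on
   two non-adjacent vertices of the 5-cycle, and each such point is the limit of an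
   explicit curve on the affine surface.  In the chart y_0 = 1 the closure is a graph over
   the quadric t^2 + t = y_2 y_3, which is smooth because (2t + 1)^2 = 1 + 4 y_2 y_3; the
   other charts at infinity follow by symmetry.  Being the zero set of the quadrics, the
   closure meets the unit sphere of K^6, compact for K = R and K = C, in a compact set. *)

From Pilot Require Import Defs.
From HB Require Import structures.
From mathcomp Require Import all_boot all_order all_algebra perm.
From mathcomp Require Import all_classical all_reals all_analysis.
From mathcomp Require Import complex ring.
Import numFieldNormedType.Exports.
Import Order.TTheory GRing.Theory Num.Theory.
Set Implicit Arguments. Unset Strict Implicit. Unset Printing Implicit Defensive.
Local Open Scope ring_scope.
Local Open Scope classical_set_scope.

Lemma closed_point (K : numFieldType) (V : normedModType K) (a : V) : closed [set a].
Proof.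
by apply: accessible_closed_set1; apply: hausdorff_accessible; exact: norm_hausdorff.
Qed.

Lemma open_coord_neq0 (K : numFieldType) n (i : 'I_n) :
  open [set x : 'rV[K]_n | x ord0 i != 0].
Proof.
have -> : [set x : 'rV[K]_n | x ord0 i != 0] = ~` ((fun x => x ord0 i) @^-1` [set 0]).
  by apply/seteqP; split => x /= /eqP.
apply: closed_openC; apply: preimage_closed; last exact: closed_point.
by move=> x _; exact: (@coord_continuous K 1 n ord0 i).
Qed.

Lemma closed_unit_sphere (K : numFieldType) n : closed [set v : 'rV[K]_n | `|v| = 1].
Proof.
have -> : [set v : 'rV[K]_n | `|v| = 1] = (fun v => `|v|) @^-1` [set 1] by [].
apply: preimage_closed; last exact: closed_point.
by move=> v _; exact: norm_continuous.
Qed.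

Lemma normr_entry_le (K : numDomainType) m n (A : 'M[K]_(m, n)) i j : `|A i j| <= `|A|.
Proof. by rewrite -[leLHS]nngE [leRHS]mx_normE num_le; exact: (le_bigmax _ _ (i, j)). Qed.

Lemma closure_preimage (T U : topologicalType) (f : T -> U) (A : set U) :
  continuous f -> closure (f @^-1` A) `<=` f @^-1` closure A.
Proof.
move=> f_cont x clx B /f_cont fB.
by have [y [Ay By]] := clx _ fB; exists (f y).
Qed.

Lemma is_derive_scalel (K : numFieldType) (V W : normedModType K) (f : V -> K) (w : W)
    x v df :
  is_derive x v f df -> is_derive x v (fun y => f y *: w) (df *: w).
Proof.
move=> [fx_derivable <-].
have quotient : (fun h : K => h^-1 *: (((fun y => f y *: w) \o shift x) (h *: v)
    - f x *: w)) @ 0^' --> 'D_v f x *: w.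
  under eq_fun do rewrite /= -scalerBl scalerA.
  exact: cvgZr_tmp.
by apply: DeriveDef; [apply/cvg_ex; exists ('D_v f x *: w) | exact: cvg_lim].
Qed.

(** * Polynomial maps *)

Section PolynomialExpressions.
Variables (K : numFieldType) (n : nat).

Inductive pexpr :=
  | PConst of K
  | PVar of 'I_n
  | PAdd of pexpr & pexpr
  | PMul of pexpr & pexpr
  | POpp of pexpr.

Fixpoint peval (e : pexpr) (x : 'rV[K]_n) : K :=
  match e with
  | PConst c => c
  | PVar i => x ord0 i
  | PAdd a b => peval a x + peval b x
  | PMul a b => peval a x * peval b x
  | POpp a => - peval a x
  end.

Fixpoint pderiv (e : pexpr) (v : 'rV[K]_n) : pexpr :=
  match e with
  | PConst _ => PConst 0
  | PVar i => PConst (v ord0 i)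
  | PAdd a b => PAdd (pderiv a v) (pderiv b v)
  | PMul a b => PAdd (PMul a (pderiv b v)) (PMul b (pderiv a v))
  | POpp a => POpp (pderiv a v)
  end.

Lemma differentiable_peval e x : differentiable (peval e) x.
Proof.
elim: e => [c|i|a IHa b IHb|a IHa b IHb|a IHa] /=.
- exact: differentiable_cst.
- exact: differentiable_coord.
- exact: differentiableD.
- exact: differentiableM.
- exact: differentiableN.
Qed.

Lemma is_derive_peval e x v : is_derive x v (peval e) (peval (pderiv e v) x).
Proof.
elim: e => [c|i|a IHa b IHb|a IHa b IHb|a IHa] /=.
- exact: is_derive_cst.
- have quotient : (fun h : K => h^-1 *: (((fun y => y ord0 i) \o shift x) (h *: v)
      - x ord0 i)) @ 0^' --> v ord0 i.
    apply: cvg_near_cst; near=> h.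
    rewrite /= !mxE addrK [_ *: _]mulrA mulVf ?mul1r //.
    by near: h; exact: nbhs_dnbhs_neq.
  by apply: DeriveDef; [apply/cvg_ex; exists (v ord0 i) | exact: cvg_lim].
- exact: is_deriveD.
- apply: (is_derive_eq (is_deriveM IHa IHb)).
  by rewrite /GRing.scale /= mulrC [X in _ + X]mulrC.
- exact: is_deriveN.
Unshelve. all: by end_near.
Qed.

Definition pmap m (es : 'I_m -> pexpr) (x : 'rV[K]_n) : 'rV[K]_m :=
  \row_j peval (es j) x.

Definition pderivs m (es : 'I_m -> pexpr) v j := pderiv (es j) v.

Fixpoint iter_pderivs m (vs : seq 'rV[K]_n) (es : 'I_m -> pexpr) :=
  if vs is v :: vs then pderivs (iter_pderivs vs es) v else es.

Lemma pmapE m (es : 'I_m -> pexpr) x :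
  pmap es x = \sum_(j < m) peval (es j) x *: (delta_mx 0 j : 'rV[K]_m).
Proof.
apply/rowP => k; rewrite mxE summxE (bigD1 k) //= big1 => [|j /negbTE jk].
  by rewrite !mxE !eqxx mulr1 addr0.
by rewrite !mxE eq_sym jk andbF mulr0.
Qed.

Lemma pmap_sum m (es : 'I_m -> pexpr) :
  pmap es = \sum_(j < m) (fun x => peval (es j) x *: (delta_mx 0 j : 'rV[K]_m)).
Proof. by apply/funext => x; rewrite pmapE fct_sumE. Qed.

Lemma differentiable_pmap m (es : 'I_m -> pexpr) x : differentiable (pmap es) x.
Proof.
rewrite pmap_sum; apply: differentiable_sum => j.
exact/differentiableZl/differentiable_peval.
Qed.

Lemma continuous_pmap m (es : 'I_m -> pexpr) : continuous (pmap es).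
Proof. by move=> x; apply/differentiable_continuous/differentiable_pmap. Qed.

Lemma is_derive_pmap m (es : 'I_m -> pexpr) x v :
  is_derive x v (pmap es) (pmap (pderivs es v) x).
Proof.
rewrite pmap_sum pmapE; apply: is_derive_sum => j.
exact/is_derive_scalel/is_derive_peval.
Qed.

Lemma dirD_pmap m (vs : seq 'rV[K]_n) (es : 'I_m -> pexpr) :
  dirD vs (pmap es) = pmap (iter_pderivs vs es).
Proof.
elim: vs => [|v vs IH] //=; rewrite IH.
by apply/funext => x; have [_ ->] := is_derive_pmap (iter_pderivs vs es) x v.
Qed.

Lemma smooth_on_pmap m U (es : 'I_m -> pexpr) : smooth_on U (pmap es).
Proof.
move=> vs x _; rewrite dirD_pmap; split; last exact: continuous_pmap.
by move=> v; apply/diff_derivable/differentiable_pmap.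
Qed.

Lemma jacobian_pmap m (es : 'I_m -> pexpr) p :
  Defs.jacobian (pmap es) p = \matrix_(i, j) peval (pderiv (es j) (delta_mx 0 i)) p.
Proof.
apply/matrixP => i j; rewrite !mxE.
by have [_ ->] := is_derive_pmap es p (delta_mx 0 i); rewrite mxE.
Qed.

Lemma closed_pmap_zeros m (es : 'I_m -> pexpr) : closed (pmap es @^-1` [set 0]).
Proof.
apply: preimage_closed; last exact: closed_point.
by move=> x _; exact: continuous_pmap.
Qed.

End PolynomialExpressions.

Arguments PConst {K n}.
Arguments PVar {K n}.

Declare Scope pexpr_scope.
Delimit Scope pexpr_scope with P.
Bind Scope pexpr_scope with pexpr.
Notation "''x_' i" := (PVar i%R) (at level 8, i at level 2, format "''x_' i") : pexpr_scope.
Notation "1" := (PConst 1) : pexpr_scope.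
Notation "a + b" := (PAdd a b) : pexpr_scope.
Notation "a * b" := (PMul a b) : pexpr_scope.
Notation "a - b" := (PAdd a (POpp b)) : pexpr_scope.

Lemma pmap3_eq0 (K : numFieldType) n (e0 e1 e2 : pexpr K n) x :
  pmap (tnth [tuple e0; e1; e2]) x = 0 <->
  [/\ peval e0 x = 0, peval e1 x = 0 & peval e2 x = 0].
Proof.
split=> [/rowP e | [h0 h1 h2]].
  by split; [move: (e 0) | move: (e 1) | move: (e 2)]; rewrite !mxE.
by apply/rowP => -[[|[|[|//]]] lt_j3]; rewrite !mxE.
Qed.

Lemma closure_pmap_curve (K : numFieldType) m (A : set 'rV[K]_m) (es : 'I_m -> pexpr K 1) :
  (forall u, u != 0 -> A (pmap es (const_mx u))) -> closure A (pmap es (const_mx 0)).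
Proof.
move=> curveA.
have curve_cont : continuous (fun u : K => pmap es (const_mx u)).
  have -> : (fun u : K => pmap es (const_mx u)) = pmap es \o (fun u => u *: const_mx 1).
    by apply/funext => u; congr pmap; apply/rowP => j; rewrite !mxE mulr1.
  by move=> u; apply: continuous_comp; [exact: scalel_continuous | exact: continuous_pmap].
apply: (@closed_cvg _ _ (0 : K)^' _ (fun u => pmap es (const_mx u))).
- exact: closed_closure.
- by near=> u; apply/subset_closure/curveA; near: u; exact: nbhs_dnbhs_neq.
- exact: (continuous_withinNx _ _).1 (curve_cont 0).
Unshelve. all: by end_near.
Qed.

(** * Permuting coordinates *)

Definition submanifold_at {K : numFieldType} {n : nat} (k : nat) (M : set 'rV[K]_n)
    (p : 'rV[K]_n) :=
  exists (U : set 'rV[K]_n) (F : 'rV[K]_n -> 'rV[K]_(n - k)),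
    [/\ open U, U p, smooth_on U F, (forall x, U x -> (M x <-> F x = 0)) &
        \rank (Defs.jacobian F p) = (n - k)%N].

Section CoordinatePermutation.
Variables (K : numFieldType) (n : nat) (s : 'S_n).
Implicit Types (x v : 'rV[K]_n).

Lemma continuous_col_perm : continuous (col_perm s : 'rV[K]_n -> 'rV[K]_n).
Proof.
have -> : col_perm s = pmap (fun j => PVar (s j)) :> ('rV[K]_n -> 'rV[K]_n).
  by apply/funext => x; apply/rowP => j; rewrite !mxE.
exact: continuous_pmap.
Qed.

Lemma col_perm_eq0 v : (col_perm s v == 0) = (v == 0).
Proof.
apply/eqP/eqP => [|->]; last by apply/rowP => i; rewrite !mxE.
move/(congr1 (col_perm s^-1%g)); rewrite -col_permM mulVg col_perm1 => ->.
by apply/rowP => i; rewrite !mxE.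
Qed.

Lemma col_perm_delta i : col_perm s (delta_mx 0 i : 'rV[K]_n) = delta_mx 0 (s^-1%g i).
Proof. by apply/rowP => j; rewrite !mxE (canF_eq (permK s)). Qed.

Lemma mxrank_row_perm m (t : 'S_n) (A : 'M[K]_(n, m)) : \rank (row_perm t A) = \rank A.
Proof. by rewrite row_permE eqmxMfull // row_full_unit unitmx_perm. Qed.

Section Composition.
Variables (m : nat) (F : 'rV[K]_n -> 'rV[K]_m).

Let quotient_col_perm x v :
  (fun h : K => h^-1 *: (((F \o col_perm s) \o shift x) (h *: v) - (F \o col_perm s) x)) =
  (fun h : K => h^-1 *: ((F \o shift (col_perm s x)) (h *: col_perm s v) - F (col_perm s x))).
Proof. by apply/funext => h; rewrite /= linearP. Qed.

Lemma derive_col_perm x v : 'D_v (F \o col_perm s) x = 'D_(col_perm s v) F (col_perm s x).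
Proof. by rewrite /derive quotient_col_perm. Qed.

Lemma derivable_col_perm x v :
  derivable (F \o col_perm s) x v = derivable F (col_perm s x) (col_perm s v).
Proof. by rewrite /derivable quotient_col_perm. Qed.

Lemma jacobian_col_perm p :
  Defs.jacobian (F \o col_perm s) p = row_perm s^-1%g (Defs.jacobian F (col_perm s p)).
Proof. by apply/matrixP => i j; rewrite !mxE derive_col_perm col_perm_delta. Qed.

End Composition.

Lemma dirD_col_perm m (F : 'rV[K]_n -> 'rV[K]_m) vs :
  dirD vs (F \o col_perm s) = dirD (map (col_perm s) vs) F \o col_perm s.
Proof.
elim: vs => [|v vs IH] //=; rewrite IH.
by apply/funext => x; rewrite /= derive_col_perm.
Qed.

Lemma smooth_on_col_perm m (F : 'rV[K]_n -> 'rV[K]_m) U :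
  smooth_on U F -> smooth_on (col_perm s @^-1` U) (F \o col_perm s).
Proof.
move=> F_smooth vs x Ux; have [F_derivable F_cont] := F_smooth (map (col_perm s) vs) _ Ux.
rewrite dirD_col_perm; split=> [v|]; first by rewrite derivable_col_perm.
by apply: continuous_comp; [exact: continuous_col_perm | exact: F_cont].
Qed.

Lemma submanifold_at_col_perm k (M : set 'rV[K]_n) p :
  submanifold_at k M (col_perm s p) -> submanifold_at k (col_perm s @^-1` M) p.
Proof.
move=> [U [F [U_open Up F_smooth MF F_rank]]].
exists (col_perm s @^-1` U), (F \o col_perm s); split => //.
- by apply: open_comp U_open => x _; exact: continuous_col_perm.
- exact: smooth_on_col_perm.
- by move=> x Ux; exact: MF.
- by rewrite jacobian_col_perm mxrank_row_perm.
Qed.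

End CoordinatePermutation.

Lemma lift_perm_decomposition n (s : 'S_n.+1) i : exists t, s = lift_perm i (s i) t.
Proof.
have s_lift k : {k' | s (lift i k) = lift (s i) k'}.
  case: (unliftP (s i) (s (lift i k))) => [k' ->|/perm_inj/eqP]; first by exists k'.
  by rewrite eq_sym (negbTE (neq_lift i k)).
have t_inj : injective (fun k => sval (s_lift k)).
  by move=> k1 k2 /(congr1 (lift (s i))); rewrite -!(svalP (s_lift _)) => /perm_inj/lift_inj.
exists (perm t_inj); apply/permP => j; case: (unliftP i j) => [k ->|->].
  by rewrite lift_perm_lift permE; exact: svalP (s_lift k).
by rewrite lift_perm_id.
Qed.

Lemma col_perm_chart (K : numFieldType) (t : 'S_5) (i j : 'I_6) (w : 'rV[K]_5) :
  col_perm (lift_perm i j t) (chart j w) = chart i (col_perm t w).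
Proof.
apply/rowP => k; rewrite !mxE; case: (unliftP i k) => [k' ->|->].
  by rewrite lift_perm_lift !liftK mxE.
by rewrite lift_perm_id !unlift_none.
Qed.

Lemma in_chart_perm (K : numFieldType) (S : set 'rV[K]_6) (s : 'S_6) i :
  (forall v, S (col_perm s v) <-> S v) ->
  exists t : 'S_5, in_chart (s i) S = col_perm t @^-1` in_chart i S.
Proof.
move=> S_inv; have [t st] := lift_perm_decomposition s i.
exists t; apply/seteqP; split=> w.
all: by rewrite /in_chart /= -(col_perm_chart _ i (s i)) -st S_inv.
Qed.

(** * The Lyness surface and its closure *)

Lemma forall_ord5E (P : 'I_5 -> Prop) : (forall k, P k) <-> [/\ P 0, P 1, P 2, P 3 & P 4].
Proof.
split=> [h | [P0 P1 P2 P3 P4] k]; first by split; apply: h.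
rewrite -[k]natr_Zp.
by case: k => [[|[|[|[|[|//]]]]] lt_k5]; rewrite /= ?mulr0n ?mulr1n.
Qed.

Lemma inord_natr n k : (k < n.+2)%N -> inord k = k%:R :> 'I_n.+2.
Proof. by move=> lt_kn; rewrite -{2}(inordK lt_kn) natr_Zp. Qed.

Section LynessSurface.
Variable K : numFieldType.
Implicit Types (x w p : 'rV[K]_5) (v : 'rV[K]_6).

(* Indices are taken in 'I_5 = Z/5Z, so that k + 2 and k + 3 wrap around. *)
Definition lyness x := forall k : 'I_5, 1 + x ord0 k = x ord0 (k + 2) * x ord0 (k + 3).

(* In the coordinates (t : y_0 : ... : y_4), t is v ord0 ord0 and y_k is
   v ord0 (lift ord0 k). *)
Definition hlyness v := forall k : 'I_5,
  v ord0 ord0 ^+ 2 + v ord0 ord0 * v ord0 (lift ord0 k) =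
  v ord0 (lift ord0 (k + 2)) * v ord0 (lift ord0 (k + 3)).

Lemma lynessE x : lyness x <->
  [/\ 1 + x ord0 0 = x ord0 2 * x ord0 3, 1 + x ord0 1 = x ord0 3 * x ord0 4,
      1 + x ord0 2 = x ord0 4 * x ord0 0, 1 + x ord0 3 = x ord0 0 * x ord0 1 &
      1 + x ord0 4 = x ord0 1 * x ord0 2].
Proof.
have E (k a b : 'I_5) : k + 2 = a -> k + 3 = b ->
    (1 + x ord0 k = x ord0 (k + 2) * x ord0 (k + 3)) = (1 + x ord0 k = x ord0 a * x ord0 b).
  by move=> <- <-.
rewrite /lyness forall_ord5E (E 0 2 3) ?(E 1 3 4) ?(E 2 4 0) ?(E 3 0 1) ?(E 4 1 2) //.
all: exact/val_inj.
Qed.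

Lemma sys_lyness x : sys x <-> lyness x.
Proof. by rewrite lynessE /sys /Defs.coord !inord_natr // mulr0n mulr1n. Qed.

Lemma hlynessE v : hlyness v <->
  [/\ v ord0 0 ^+ 2 + v ord0 0 * v ord0 1 = v ord0 3 * v ord0 4,
      v ord0 0 ^+ 2 + v ord0 0 * v ord0 2 = v ord0 4 * v ord0 5,
      v ord0 0 ^+ 2 + v ord0 0 * v ord0 3 = v ord0 5 * v ord0 1,
      v ord0 0 ^+ 2 + v ord0 0 * v ord0 4 = v ord0 1 * v ord0 2 &
      v ord0 0 ^+ 2 + v ord0 0 * v ord0 5 = v ord0 2 * v ord0 3].
Proof.
have E (k : 'I_5) (a b c : 'I_6) :
    lift ord0 k = a -> lift ord0 (k + 2) = b -> lift ord0 (k + 3) = c ->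
    (v ord0 ord0 ^+ 2 + v ord0 ord0 * v ord0 (lift ord0 k) =
     v ord0 (lift ord0 (k + 2)) * v ord0 (lift ord0 (k + 3))) =
    (v ord0 0 ^+ 2 + v ord0 0 * v ord0 a = v ord0 b * v ord0 c).
  by move=> <- <- <-.
rewrite /hlyness forall_ord5E (E 0 1 3 4) ?(E 1 2 4 5) ?(E 2 3 5 1) ?(E 3 4 1 2)
  ?(E 4 5 2 3) //.
all: exact/val_inj.
Qed.

Definition rot5 (j : 'I_5) : 'S_5 := perm (addIr j).

Definition rot6 (j : 'I_5) : 'S_6 := lift_perm ord0 ord0 (rot5 j).

Lemma lyness_rot j x : lyness (col_perm (rot5 j) x) <-> lyness x.
Proof.
have rotE k : col_perm (rot5 j) x ord0 k = x ord0 (k + j) by rewrite mxE permE.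
split=> h k; last by rewrite !rotE !(addrAC _ _ j); exact: h.
by have := h (k - j); rewrite !rotE (subrK j) -(addrAC _ j 2) -(addrAC _ j 3) !(subrK j).
Qed.

Lemma hlyness_rot j v : hlyness (col_perm (rot6 j) v) <-> hlyness v.
Proof.
have rotE k : col_perm (rot6 j) v ord0 (lift ord0 k) = v ord0 (lift ord0 (k + j)).
  by rewrite mxE lift_perm_lift permE.
have rot0 : col_perm (rot6 j) v ord0 ord0 = v ord0 ord0 by rewrite mxE lift_perm_id.
split=> h k; last by rewrite rot0 !rotE !(addrAC _ _ j); exact: h.
by have := h (k - j); rewrite rot0 !rotE (subrK j) -(addrAC _ j 2) -(addrAC _ j 3) !(subrK j).
Qed.

Lemma hlyness_chart0 w : hlyness (chart ord0 w) <-> lyness w.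
Proof.
have chartE k : chart ord0 w ord0 (lift ord0 k) = w ord0 k by rewrite mxE liftK.
have chart0 : chart ord0 w ord0 ord0 = 1 by rewrite mxE unlift_none.
by split=> h k; move: (h k); rewrite chart0 !chartE expr1n mul1r.
Qed.

Lemma hlynessZ t v : hlyness v -> hlyness (t *: v).
Proof.
move=> h k; rewrite !mxE.
transitivity (t ^+ 2 * (v ord0 ord0 ^+ 2 + v ord0 ord0 * v ord0 (lift ord0 k))).
  by ring.
by rewrite h; ring.
Qed.

Lemma lyness_three_relations (a b c d e : K) : a != 0 ->
  1 + a = c * d -> 1 + c = e * a -> 1 + d = a * b -> 1 + b = d * e /\ 1 + e = b * c.
Proof.
move=> a0 h0 h2 h3; split; apply/eqP; rewrite -subr_eq0; apply/eqP.
  have -> : 1 + b - d * e = a^-1 * (1 + a - c * d + d * (1 + c - e * a) - (1 + d - a * b)).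
    by field.
  by rewrite h0 h2 h3; ring.
have -> : 1 + e - b * c = a^-1 * (1 + a - c * d - (1 + c - e * a) + c * (1 + d - a * b)).
  by field.
by rewrite h0 h2 h3; ring.
Qed.

Definition lyness_local : 'I_3 -> pexpr K 5 :=
  tnth [tuple (1 + 'x_0 - 'x_2 * 'x_3)%P; (1 + 'x_2 - 'x_4 * 'x_0)%P;
              (1 + 'x_3 - 'x_0 * 'x_1)%P].

Lemma rank_lyness_local p : p ord0 0 != 0 ->
  \rank (Defs.jacobian (pmap lyness_local) p) = 3.
Proof.
move=> p0; rewrite jacobian_pmap; apply/eqP/row_fullP.
exists (\matrix_(k < 3, i < 5) match val k, val i with
   | 0, 0 => 1
   | 0, 1 => - p ord0 1 / p ord0 0
   | 0, 4 => - p ord0 4 / p ord0 0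
   | 1, 4 => - (p ord0 0)^-1
   | 2, 1 => - (p ord0 0)^-1
   | _, _ => 0 end).
apply/matrixP => k l; rewrite !mxE !big_ord_recl big_ord0 !mxE.
by case: k => [[|[|[|//]]] ?]; case: l => [[|[|[|//]]] ?]; rewrite /= !mxE /=; field.
Qed.

Lemma submanifold_at_solset0 p : p ord0 0 != 0 -> submanifold_at 2 (solset K) p.
Proof.
move=> p0; exists [set x | x ord0 0 != 0], (pmap lyness_local); split => //.
- exact: open_coord_neq0.
- exact: smooth_on_pmap.
- move=> x /= x0; rewrite /solset /= sys_lyness lynessE pmap3_eq0 /=.
  split=> [[e0 _ e2 e3 _] | [/subr0_eq e0 /subr0_eq e2 /subr0_eq e3]].
    by rewrite e0 e2 e3 !subrr.
  by have [e1 e4] := lyness_three_relations x0 e0 e2 e3.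
- exact: rank_lyness_local.
Qed.

Lemma submanifold_lyness : submanifold 2 (solset K).
Proof.
move=> p /sys_lyness p_lyness.
have [j pj] : exists j, p ord0 j != 0.
  apply/existsP; apply: contraT; rewrite negb_exists => /forallP p0.
  have := p_lyness 0; rewrite !(eqP (negPn (p0 _))) mulr0 addr0 => /eqP.
  by rewrite oner_eq0.
have q0 : col_perm (rot5 j) p ord0 0 != 0 by rewrite mxE permE add0r.
have := submanifold_at_col_perm (submanifold_at_solset0 q0).
congr submanifold_at; apply/seteqP; split => x /=.
all: by rewrite /solset /= !sys_lyness lyness_rot.
Qed.

Lemma hlyness_cone v : hlyness v -> v ord0 ord0 != 0 -> cone (solset K) v.
Proof.
move=> hv v0; pose z : 'rV[K]_5 := \row_j (v ord0 (lift ord0 j) / v ord0 ord0).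
have vE : v = v ord0 ord0 *: chart ord0 z.
  apply/rowP => i; rewrite !mxE; case: (unliftP ord0 i) => [j ->|->].
    by rewrite mxE mulrC divfK.
  by rewrite mulr1.
exists (v ord0 ord0), z; split => //; apply/sys_lyness/hlyness_chart0.
have -> : chart ord0 z = (v ord0 ord0)^-1 *: v by rewrite {2}vE scalerA mulVf ?scale1r.
exact: hlynessZ.
Qed.

Lemma cone_hlyness : cone (solset K) `<=` hlyness.
Proof. by move=> _ [t [z [_ /sys_lyness/hlyness_chart0 hz ->]]]; exact: hlynessZ. Qed.

Definition hlyness_quadric (k : 'I_5) : pexpr K 6 :=
  ('x_ord0 * 'x_ord0 + 'x_ord0 * 'x_(lift ord0 k)
   - 'x_(lift ord0 (k + 2)) * 'x_(lift ord0 (k + 3)))%P.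

Lemma closed_hlyness : closed hlyness.
Proof.
have -> : hlyness = pmap hlyness_quadric @^-1` [set 0].
  apply/seteqP; split => v /=.
    by move=> h; apply/rowP => k; rewrite !mxE /= -expr2 h subrr.
  by move=> /rowP e k; move: (e k); rewrite !mxE /= -expr2 => /subr0_eq.
exact: closed_pmap_zeros.
Qed.

Lemma cone_rot j v : cone (solset K) v -> cone (solset K) (col_perm (rot6 j) v).
Proof.
move=> [t [z [t0 /sys_lyness hz ->]]]; exists t, (col_perm (rot5 j) z); split => //.
  by apply/sys_lyness/lyness_rot.
by rewrite -(col_perm_chart _ ord0 ord0) linearZ.
Qed.

Lemma closure_cone_rot j v :
  closure (cone (solset K)) v -> closure (cone (solset K)) (col_perm (rot6 j) v).
Proof.
move=> clv; apply: (closure_preimage (@continuous_col_perm K 6 (rot6 j))).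
by apply: closureS clv => w; exact: cone_rot.
Qed.

Definition ideal_point (a b : K) : 'rV[K]_6 :=
  \row_i (if i == lift ord0 0 then a else if i == lift ord0 2 then b else 0).

(* The affine surface is parametrized by (x_0, x_2), with x_3 = (1 + x_0) / x_2,
   x_4 = (1 + x_2) / x_0 and x_1 = (1 + x_0 + x_2) / (x_0 x_2).  Putting x_0 = a / u,
   x_2 = b / u and rescaling by u gives this curve through the ideal point at u = 0. *)
Definition ideal_curve (a b : K) : 'I_6 -> pexpr K 1 :=
  tnth [tuple 'x_0; PConst a; PConst (a * b)^-1 * 'x_0 * 'x_0 * ('x_0 + PConst (a + b));
              PConst b; PConst b^-1 * 'x_0 * ('x_0 + PConst a);
              PConst a^-1 * 'x_0 * ('x_0 + PConst b)]%P.

Lemma closure_cone_ideal_nz a b : a != 0 -> b != 0 ->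
  closure (cone (solset K)) (ideal_point a b).
Proof.
move=> a0 b0; have -> : ideal_point a b = pmap (ideal_curve a b) (const_mx 0).
  apply/rowP => i; rewrite !mxE.
  by case: i => [[|[|[|[|[|[|//]]]]]] ?]; rewrite /= ?mxE; ring.
apply: closure_pmap_curve => u u0; apply: hlyness_cone; last by rewrite !mxE /= mxE.
by apply/hlynessE; rewrite !mxE /= !mxE; split; field; rewrite ?a0 ?b0.
Qed.

(* A coordinate that vanishes is moved off 0 by u, the others stay fixed. *)
Definition ideal_line (a b : K) : 'I_6 -> pexpr K 1 :=
  tnth [tuple PConst 0; PConst a + PConst (a == 0)%:R * 'x_0; PConst 0;
              PConst b + PConst (b == 0)%:R * 'x_0; PConst 0; PConst 0]%P.

Lemma closure_cone_ideal a b : closure (cone (solset K)) (ideal_point a b).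
Proof.
have nudge_neq0 (c u : K) : u != 0 -> c + (c == 0)%:R * u != 0.
  by move=> u0; have [->|c0] := eqVneq c 0; rewrite ?eqxx ?add0r ?mul1r // mul0r addr0.
have ideal_lineE u : pmap (ideal_line a b) (const_mx u) =
    ideal_point (a + (a == 0)%:R * u) (b + (b == 0)%:R * u).
  by apply/rowP => -[[|[|[|[|[|[|//]]]]]] ?]; rewrite !mxE /= ?mxE.
have -> : ideal_point a b = pmap (ideal_line a b) (const_mx 0).
  by rewrite ideal_lineE !mulr0 !addr0.
rewrite [closure _](closure_id _).1; last exact: closed_closure.
apply: closure_pmap_curve => u u0; rewrite ideal_lineE.
exact: closure_cone_ideal_nz (nudge_neq0 _ _ u0) (nudge_neq0 _ _ u0).
Qed.

(* At infinity every product y_k y_(k+1) of cyclically adjacent coordinates vanishes,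
   so the support of y is an independent set of the 5-cycle: {c, c + 2} for some c. *)
Lemma hlyness_ideal_support v : hlyness v -> v ord0 ord0 = 0 ->
  exists c : 'I_5, forall k, k != c -> k != c + 2 -> v ord0 (lift ord0 k) = 0.
Proof.
move=> hv v0; pose y k := v ord0 (lift ord0 k).
have adjacent k : y k * y (k + 1) = 0.
  have := hv (k + 3); rewrite v0 expr2 !mul0r addr0 -(addrA k 3 2) -(addrA k 3 3).
  rewrite (_ : 3 + 2 = 0); last exact/val_inj.
  rewrite (_ : 3 + 3 = 1); last exact/val_inj.
  by rewrite addr0 => <-.
have [[c yc] | y0] := pselect (exists c, y c != 0); last first.
  by exists 0 => k _ _; apply/eqP/negbNE/negP => yk; apply: y0; exists k.
have next_zero k : y k != 0 -> y (k + 1) = 0.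
  by move=> yk; move/eqP: (adjacent k); rewrite mulf_eq0 (negbTE yk) => /eqP.
have prev_zero : y (c + 4) = 0.
  apply/eqP; move/eqP: (adjacent (c + 4)); rewrite -addrA (_ : 4 + 1 = 0); last exact/val_inj.
  by rewrite addr0 mulf_eq0 (negbTE yc) orbF.
have from_c k : exists d, k = c + d by exists (k - c); rewrite addrC (subrK c).
have /eqP := adjacent (c + 2); rewrite -addrA (_ : 2 + 1 = 3); last exact/val_inj.
rewrite mulf_eq0 => /orP[/eqP y2 | /eqP y3].
  exists (c + 3) => k; have [d ->] := from_c k.
  rewrite -addrA (_ : 3 + 2 = 0); last exact/val_inj.
  rewrite !(inj_eq (addrI c)).
  by move: d; apply/forall_ord5E; split => //= _ _; exact: next_zero.
exists c => k; have [d ->] := from_c k; rewrite -{2}(addr0 c) !(inj_eq (addrI c)).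
by move: d; apply/forall_ord5E; split => //= _ _; exact: next_zero.
Qed.

Lemma closure_cone_hlyness v : hlyness v -> closure (cone (solset K)) v.
Proof.
move=> hv; have [v0|v0] := eqVneq (v ord0 ord0) 0; last first.
  by apply: subset_closure; exact: hlyness_cone.
have [c supp] := hlyness_ideal_support hv v0.
suff -> : v = col_perm (rot6 (- c))
    (ideal_point (v ord0 (lift ord0 c)) (v ord0 (lift ord0 (c + 2)))).
  exact/closure_cone_rot/closure_cone_ideal.
apply/rowP => i; rewrite !mxE; case: (unliftP ord0 i) => [k ->|->]; last first.
  by rewrite lift_perm_id v0.
rewrite lift_perm_lift permE !(inj_eq lift_inj) subr_eq0 subr_eq (addrC 2).
have [-> // | kc] := eqVneq k c; have [-> // | kc2] := eqVneq k (c + 2).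
exact: supp.
Qed.

Lemma proj_closureE v : proj_closure (solset K) v <-> v != 0 /\ hlyness v.
Proof.
split=> [[v0 clv] | [v0 hv]]; split => //; last exact: closure_cone_hlyness.
by rewrite ((closure_id _).1 closed_hlyness); exact: closureS cone_hlyness _ clv.
Qed.

Lemma proj_closure_rot j v :
  proj_closure (solset K) (col_perm (rot6 j) v) <-> proj_closure (solset K) v.
Proof. by rewrite !proj_closureE hlyness_rot col_perm_eq0. Qed.

Lemma chart_neq0 i w : chart i w != 0.
Proof.
by apply/eqP => /rowP /(_ i); rewrite !mxE unlift_none => /eqP; rewrite oner_eq0.
Qed.

Lemma in_chart_closureE i w :
  in_chart i (proj_closure (solset K)) w <-> hlyness (chart i w).
Proof.
rewrite /in_chart /= proj_closureE.
by split=> [[] | hw] //; split => //; exact: chart_neq0.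
Qed.

Lemma in_chart0 : in_chart ord0 (proj_closure (solset K)) = solset K.
Proof.
apply/seteqP; split=> w.
all: by rewrite /= in_chart_closureE hlyness_chart0 /solset /= sys_lyness.
Qed.

Lemma hlyness_chart1E w : hlyness (chart (lift ord0 0) w) <->
  [/\ w ord0 0 ^+ 2 + w ord0 0 = w ord0 2 * w ord0 3,
      w ord0 0 ^+ 2 + w ord0 0 * w ord0 1 = w ord0 3 * w ord0 4,
      w ord0 0 ^+ 2 + w ord0 0 * w ord0 2 = w ord0 4,
      w ord0 0 ^+ 2 + w ord0 0 * w ord0 3 = w ord0 1 &
      w ord0 0 ^+ 2 + w ord0 0 * w ord0 4 = w ord0 1 * w ord0 2].
Proof.
have entry (k : 'I_6) (j : 'I_5) : lift (lift ord0 0) j = k ->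
    chart (lift ord0 0) w ord0 k = w ord0 j.
  by move=> <-; rewrite mxE liftK.
have chart1 : chart (lift ord0 0) w ord0 1 = 1.
  by rewrite (_ : 1 = lift ord0 0) ?mxE ?unlift_none //; apply/val_inj.
rewrite hlynessE (entry 0 0) ?(entry 2 1) ?(entry 3 2) ?(entry 4 3) ?(entry 5 4)
  ?chart1 ?mulr1 ?mul1r //.
all: by apply/val_inj/eqP.
Qed.

Lemma chart1_three_relations (t a b c d : K) :
  t ^+ 2 + t = b * c -> t ^+ 2 + t * b = d -> t ^+ 2 + t * c = a ->
  t ^+ 2 + t * a = c * d /\ t ^+ 2 + t * d = a * b.
Proof.
move=> h0 h2 h3; split; apply/eqP; rewrite -subr_eq0; apply/eqP.
  have -> : t ^+ 2 + t * a - c * d =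
      t * (t ^+ 2 + t - b * c) + c * (t ^+ 2 + t * b - d) - t * (t ^+ 2 + t * c - a).
    by ring.
  by rewrite h0 h2 h3; ring.
have -> : t ^+ 2 + t * d - a * b =
    t * (t ^+ 2 + t - b * c) - t * (t ^+ 2 + t * b - d) + b * (t ^+ 2 + t * c - a).
  by ring.
by rewrite h0 h2 h3; ring.
Qed.

Definition chart1_local : 'I_3 -> pexpr K 5 :=
  tnth [tuple ('x_0 * 'x_0 + 'x_0 - 'x_2 * 'x_3)%P; ('x_0 * 'x_0 + 'x_0 * 'x_2 - 'x_4)%P;
              ('x_0 * 'x_0 + 'x_0 * 'x_3 - 'x_1)%P].

Lemma rank_chart1_local p : 2 * p ord0 0 + 1 != 0 \/ p ord0 3 != 0 ->
  \rank (Defs.jacobian (pmap chart1_local) p) = 3.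
Proof.
rewrite jacobian_pmap => p_nz; apply/eqP/row_fullP.
case: p_nz => [t0 | p3].
  exists (\matrix_(k < 3, i < 5) match val k, val i with
     | 0, 0 => (2 * p ord0 0 + 1)^-1
     | 0, 1 => (2 * p ord0 0 + p ord0 3) / (2 * p ord0 0 + 1)
     | 0, 4 => (2 * p ord0 0 + p ord0 2) / (2 * p ord0 0 + 1)
     | 1, 4 => -1
     | 2, 1 => -1
     | _, _ => 0 end).
  apply/matrixP => k l; rewrite !mxE !big_ord_recl big_ord0 !mxE.
  by case: k => [[|[|[|//]]] ?]; case: l => [[|[|[|//]]] ?]; rewrite /= !mxE /=; field.
exists (\matrix_(k < 3, i < 5) match val k, val i with
   | 0, 2 => - (p ord0 3)^-1
   | 0, 4 => - p ord0 0 / p ord0 3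
   | 1, 4 => -1
   | 2, 1 => -1
   | _, _ => 0 end).
apply/matrixP => k l; rewrite !mxE !big_ord_recl big_ord0 !mxE.
by case: k => [[|[|[|//]]] ?]; case: l => [[|[|[|//]]] ?]; rewrite /= !mxE /=; field.
Qed.

Lemma submanifold_chart1 : submanifold 2 (in_chart (lift ord0 0) (proj_closure (solset K))).
Proof.
move=> p /in_chart_closureE/hlyness_chart1E [p_eq0 _ _ _ _].
exists setT, (pmap chart1_local); split => //.
- exact: openT.
- exact: smooth_on_pmap.
- move=> x _; rewrite in_chart_closureE hlyness_chart1E pmap3_eq0 /= -!expr2.
  split=> [[e0 _ e2 e3 _] | [/subr0_eq e0 /subr0_eq e2 /subr0_eq e3]].
    by rewrite e0 e2 e3 !subrr.
  by have [e1 e4] := chart1_three_relations e0 e2 e3.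
apply: rank_chart1_local; have [t0|] := eqVneq (2 * p ord0 0 + 1) 0; [right | by left].
apply/eqP => p3.
have : (2 * p ord0 0 + 1) ^+ 2 = 4 * (p ord0 0 ^+ 2 + p ord0 0) + 1 by ring.
by rewrite t0 p_eq0 p3 !mulr0 add0r expr0n => /eqP; rewrite eq_sym oner_eq0.
Qed.

Lemma proj_submanifold_lyness : proj_submanifold 2 (proj_closure (solset K)).
Proof.
move=> i; case: (unliftP ord0 i) => [m ->|->]; last first.
  by rewrite in_chart0; exact: submanifold_lyness.
have [t ->] : exists t : 'S_5, in_chart (lift ord0 m) (proj_closure (solset K)) =
    col_perm t @^-1` in_chart (lift ord0 0) (proj_closure (solset K)).
  have <- : rot6 m (lift ord0 0) = lift ord0 m by rewrite lift_perm_lift permE add0r.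
  by apply: in_chart_perm => v; exact: proj_closure_rot.
by move=> p /submanifold_chart1; exact: submanifold_at_col_perm.
Qed.

Lemma proj_compact_lyness (B : set K) : compact B -> (forall z : K, `|z| <= 1 -> B z) ->
  proj_compact (proj_closure (solset K)).
Proof.
move=> B_compact unitB; rewrite /proj_compact.
have -> : [set v | proj_closure (solset K) v /\ `|v| = 1] = hlyness `&` [set v | `|v| = 1].
  apply/seteqP; split=> v /=; rewrite proj_closureE; first by case=> -[].
  by case=> hv v1; split => //; split => //; rewrite -normr_eq0 v1 oner_eq0.
apply: (subclosed_compact _ (rV_compact (fun _ : 'I_6 => B_compact))).
  by apply: closedI; [exact: closed_hlyness | exact: closed_unit_sphere].
by move=> v [_ v1] i; apply: unitB; rewrite -v1; exact: normr_entry_le.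
Qed.

End LynessSurface.

(** * The complex unit disk *)

Section ComplexUnitDisk.
Variable R : realType.
Local Open Scope complex_scope.
(* Through this alias R[i] receives the normed topology of a numFieldType. *)
Let C : numFieldType := R[i].

Lemma continuous_complexR : continuous (fun x : R => x%:C : C).
Proof.
move=> x; apply/cvgrPdist_lt => e e0.
have e0' : 0 < complex.Re e by move: e0; rewrite ltcE => /andP[].
have eIm : complex.Im e = 0 by move: e0; rewrite ltcE => /andP[/eqP ->].
near=> y; rewrite -rmorphB normc_def /= expr0n /= addr0 sqrtr_sqr ltcE /= eIm eqxx /=.
by near: y; apply: cvgr_dist_lt.
Unshelve. all: by end_near.
Qed.

Definition complex_of_row (u : 'rV[R]_2) : C := (u ord0 0)%:C + 'i * (u ord0 1)%:C.

Lemma continuous_complex_of_row : continuous complex_of_row.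
Proof.
pose part (j : 'I_2) (u : 'rV[R]_2) : C := (u ord0 j)%:C.
have part_cont j : continuous (part j).
  by move=> u; apply: continuous_comp; [exact: coord_continuous | exact: continuous_complexR].
have -> : complex_of_row = part 0 + 'i \*: part 1 by [].
move=> u; apply: continuousD; first exact: part_cont.
by apply: continuousZl_tmp; exact: part_cont.
Qed.

Definition unit_square : set 'rV[R]_2 := [set u | forall i, `[-1, 1]%classic (u ord0 i)].

Lemma compact_complex_square : compact (complex_of_row @` unit_square).
Proof.
apply: continuous_compact; last first.
  exact: (@rV_compact R 2 (fun=> `[-1, 1]%classic) (fun=> @segment_compact R (-1) 1)).
by apply: continuous_subspaceT => u; exact: continuous_complex_of_row.
Qed.

Lemma complex_disk_sub_square (z : C) : `|z| <= 1 -> (complex_of_row @` unit_square) z.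
Proof.
rewrite normc_def -[1]/(1%:C) lecR => z1.
exists (\row_(j < 2) if val j == 0%N then complex.Re z else complex.Im z); last first.
  by rewrite /complex_of_row !mxE /= [RHS]complexE.
move=> j; rewrite /= in_itv /= -ler_norml mxE; apply: le_trans z1.
rewrite -sqrtr_sqr; apply: ler_wsqrtr.
by case: ifP => _; rewrite ?lerDl ?lerDr sqr_ge0.
Qed.

End ComplexUnitDisk.

Theorem theorem2p1 (R : realType) :
  [/\ submanifold 2 (solset R),
      proj_submanifold 2 (proj_closure (solset R)),
      proj_compact (proj_closure (solset R)),
      proj_submanifold 2 (proj_closure (solset (complex R))) &
      proj_compact (proj_closure (solset (complex R)))].
Proof.
split; [exact: submanifold_lyness | exact: proj_submanifold_lyness | |
        exact: proj_submanifold_lyness | ].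
- apply: (proj_compact_lyness (@segment_compact R (-1) 1)) => z.
  by rewrite /= in_itv /= -ler_norml.
- exact: proj_compact_lyness (@compact_complex_square R) (@complex_disk_sub_square R).
Qed.
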